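(* Let $K>1$ and let $1\le k\le n$ be integers. Let $X_1,\ldots,X_n$ be independent non-negative random variables with cumulative distribution functions $F_1,\ldots,F_n$, each satisfying condition (C) below with parameter $K$. Set $F=\frac1n\sum_{i=1}^n F_i$ and let $q=q_F\big(\frac{k-1/2}{n}\big)$ be any quantile of order $\frac{k-1/2}{n}$ of $F$. Then for every $0<t<K^{-5}$, $$\mathbb P\Big\{\operatorname{k\text{-}min}_{1\le i\le n}X_i< t\,q\Big\}\le 4\,t^{1/(4\ln K)},$$ and for every $t>K^5$, $$\mathbb P\Big\{\operatorname{k\text{-}min}_{1\le i\le n}X_i> t\,q\Big\}\le 4\,t^{-1/(6\ln K)}.$$ In particular, every median $M$ of $\operatorname{k\text{-}min}_{1\le i\le n}X_i$ satisfies $$K^{-10}\,q\le M\le K^{13}\,q.$$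
   Context: For real numbers $a_1,\ldots,a_n$ and $1\le k\le n$, $\operatorname{k\text{-}min}_{i\le n}a_i$ denotes the $k$-th smallest element of the sequence (counted with multiplicity). Condition (C) with parameter $K>1$ for the cdf $F$ of a non-negative random variable: $\frac{F(Kt)}{1-F(Kt)}\ge \frac{2F(t)}{1-F(t)}$ for all $t>0$, with the conventions $1/0=\infty$, $1/\infty=0$. For a cdf $G$ (of a random variable $\xi$) and $r\in[0,1]$, a quantile of order $r$ is any number $q_G(r)$ with $\mathbb P\{\xi<q_G(r)\}\le r$ and $\mathbb P\{\xi\le q_G(r)\}\ge r$ (not necessarily unique); for $F=\frac1n\sum F_i$ this means $F(s)\le r$ for all $s<q_F(r)$ and $F(q_F(r))\ge r$. *)

From Stdlib Require Import Reals Lra List.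
Open Scope R_scope.

Record ProbSpace := mkPS {
  ps_car : Type;
  ps_meas : (ps_car -> Prop) -> Prop;
  ps_P : (ps_car -> Prop) -> R;
  meas_full : ps_meas (fun _ => True);
  meas_compl : forall A, ps_meas A -> ps_meas (fun w => ~ A w);
  meas_union : forall A : nat -> ps_car -> Prop,
      (forall m, ps_meas (A m)) -> ps_meas (fun w => exists m, A m w);
  P_nonneg : forall A, ps_meas A -> 0 <= ps_P A;
  P_full : ps_P (fun _ => True) = 1;
  P_sigma_add : forall A : nat -> ps_car -> Prop,
      (forall m, ps_meas (A m)) ->
      (forall m m' w, m <> m' -> A m w -> A m' w -> False) ->
      infinite_sum (fun m => ps_P (A m)) (ps_P (fun w => exists m, A m w))
}.

Definition random_variable (Om : ProbSpace) (X : ps_car Om -> R) : Prop :=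
  forall a : R, ps_meas Om (fun w => X w <= a).

Definition cdf (Om : ProbSpace) (X : ps_car Om -> R) (t : R) : R :=
  ps_P Om (fun w => X w <= t).

Fixpoint Rsum_upto (n : nat) (f : nat -> R) : R :=
  match n with O => 0 | S m => Rsum_upto m f + f m end.
Fixpoint Rprod_upto (n : nat) (f : nat -> R) : R :=
  match n with O => 1 | S m => Rprod_upto m f * f m end.

Definition independent (Om : ProbSpace) (n : nat) (X : nat -> ps_car Om -> R) : Prop :=
  forall a : nat -> R,
    ps_P Om (fun w => forall i, (i < n)%nat -> X i w <= a i)
    = Rprod_upto n (fun i => cdf Om (X i) (a i)).

Fixpoint insert_sorted (x : R) (l : list R) : list R :=
  match l with
  | nil => x :: nil
  | y :: l' => if Rle_dec x y then x :: y :: l' else y :: insert_sorted x l'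
  end.
Fixpoint isort (l : list R) : list R :=
  match l with nil => nil | x :: l' => insert_sorted x (isort l') end.
(* k-min of the sequence l, for 1 <= k <= length l *)
Definition kmin (k : nat) (l : list R) : R := nth (k - 1) (isort l) 0.

(* None stands for +infinity *)
Definition odds (a : R) : option R :=
  if Req_EM_T a 1 then None else Some (a / (1 - a)).
Definition ext_scale (c : R) (x : option R) : option R :=
  match x with None => None | Some y => Some (c * y) end.
Definition ext_le (x y : option R) : Prop :=
  match x, y with
  | _, None => True
  | None, Some _ => False
  | Some a, Some b => a <= b
  end.
(* F(Kt)/(1-F(Kt)) >= 2 F(t)/(1-F(t)) for all t > 0, with 1/0 = infinity *)
Definition condC (F : R -> R) (K : R) : Prop :=
  forall t, 0 < t -> ext_le (ext_scale 2 (odds (F t))) (odds (F (K * t))).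

Definition is_quantile (G : R -> R) (r q : R) : Prop :=
  (forall s, s < q -> G s <= r) /\ r <= G q.

Definition is_median (Om : ProbSpace) (Y : ps_car Om -> R) (M : R) : Prop :=
  1/2 <= ps_P Om (fun w => Y w <= M) /\ 1/2 <= ps_P Om (fun w => M <= Y w).

From Stdlib Require Import Reals Lra Lia List Sorting.Sorted Classical
  FunctionalExtensionality PropExtensionality.
Open Scope R_scope.

(* The event {kmin <= c} is the event "at least k of the independent events
   {X_i <= c} occur", so its probability is the tail [tail_poly p n k] of a
   Poisson-binomial law with success probabilities p_i = F_i(c).
   The upper tail uses the complementary identity
   1 - tail_poly p n k = tail_poly (1 - p) n (n + 1 - k).

   Condition (C), iterated m times, says that the odds of F_i(K^m s) dominate
   2^m times the odds of F_i(s) ([odds_dom]).  An exponential-moment (Chernoff)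
   bound with parameter lam = m ln 2 then turns any such domination, together
   with a sum of the dominating probabilities at most k - 1/2 (which the
   quantile q provides), into the bound 2^(-m/2) for the tail.  Choosing m from
   t by a bracket K^m < y <= K^(m+1) gives the stated powers of t, and m = 9,
   m = 13 give the median bounds. *)

Section ProbabilityBasics.
Variable Om : ProbSpace.
Implicit Types A B : ps_car Om -> Prop.

Lemma event_ext A B : (forall w, A w <-> B w) -> A = B.
Proof.
  intros H; apply functional_extensionality; intros w.
  apply propositional_extensionality; auto.
Qed.

Lemma meas_ext A B : (forall w, A w <-> B w) -> ps_meas Om A -> ps_meas Om B.
Proof. intros H; rewrite (event_ext A B H); auto. Qed.

Lemma P_ext A B : (forall w, A w <-> B w) -> ps_P Om A = ps_P Om B.
Proof. intros H; rewrite (event_ext A B H); auto. Qed.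

Lemma meas_empty : ps_meas Om (fun _ => False).
Proof. apply (meas_ext (fun _ => ~ True)); [tauto | apply meas_compl, meas_full]. Qed.

Lemma meas_or A B : ps_meas Om A -> ps_meas Om B -> ps_meas Om (fun w => A w \/ B w).
Proof.
  intros HA HB.
  apply (meas_ext (fun w => exists m : nat, (if Nat.eqb m 0 then A else B) w)).
  - intros w; split.
    + intros [m Hm]; destruct (Nat.eqb m 0); auto.
    + intros [H|H]; [exists 0%nat | exists 1%nat]; auto.
  - apply meas_union; intros m; destruct (Nat.eqb m 0); auto.
Qed.

Lemma meas_and A B : ps_meas Om A -> ps_meas Om B -> ps_meas Om (fun w => A w /\ B w).
Proof.
  intros HA HB.
  apply (meas_ext (fun w => ~ (~ A w \/ ~ B w))).
  - intros w; split; [intros H; split; apply NNPP; tauto | tauto].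
  - apply meas_compl, meas_or; apply meas_compl; auto.
Qed.

(* The constant sequence of empty events is disjoint, so sigma-additivity forces
   [P empty = 0]: a constant series with a finite sum has zero terms. *)
Lemma P_empty : ps_P Om (fun _ => False) = 0.
Proof.
  set (c := ps_P Om (fun _ => False)).
  assert (Hsum := P_sigma_add Om (fun _ _ => False) (fun _ => meas_empty)
                    (fun _ _ _ _ H _ => H)); cbv beta in Hsum.
  rewrite (P_ext (fun w => exists _ : nat, False) (fun _ => False)) in Hsum
    by (intros w; split; [intros [_ H]; auto | tauto]).
  fold c in Hsum.
  assert (Hpartial : forall N, sum_f_R0 (fun _ => c) N = INR (S N) * c).
  { induction N as [|N IH]; [simpl; ring|].
    simpl sum_f_R0; rewrite IH, !S_INR; ring. }
  destruct (Req_dec c 0) as [|Hc]; auto.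
  destruct (Hsum (Rabs c) (Rabs_pos_lt c Hc)) as [N HN].
  specialize (HN (S N) ltac:(lia)).
  rewrite Hpartial in HN; unfold Rdist in HN.
  replace (INR (S (S N)) * c - c) with (INR (S N) * c) in HN by (rewrite (S_INR (S N)); ring).
  rewrite Rabs_mult, Rabs_right in HN by (apply Rle_ge, pos_INR).
  assert (1 <= INR (S N)) by (rewrite S_INR; pose proof (pos_INR N); lra).
  pose proof (Rabs_pos c); nra.
Qed.

Lemma P_or A B : ps_meas Om A -> ps_meas Om B -> (forall w, A w -> B w -> False) ->
  ps_P Om (fun w => A w \/ B w) = ps_P Om A + ps_P Om B.
Proof.
  intros HA HB Hdisj.
  set (S := fun m : nat => match m with O => A | 1%nat => B | _ => fun _ => False end).
  assert (HS : forall m, ps_meas Om (S m)) by (intros [|[|m]]; simpl; auto using meas_empty).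
  assert (HSdisj : forall m m' w, m <> m' -> S m w -> S m' w -> False).
  { intros [|[|m]] [|[|m']] w Hne H1 H2; simpl in *; eauto; lia. }
  assert (Hsum := P_sigma_add Om S HS HSdisj); cbv beta in Hsum.
  rewrite (P_ext (fun w => exists m, S m w) (fun w => A w \/ B w)) in Hsum.
  2:{ intros w; split.
      - intros [[|[|m]] Hm]; simpl in Hm; tauto.
      - intros [H|H]; [exists 0%nat | exists 1%nat]; auto. }
  apply (uniqueness_sum (fun m => ps_P Om (S m))); auto.
  intros eps Heps; exists 1%nat; intros m Hm.
  assert (Hpartial : sum_f_R0 (fun m => ps_P Om (S m)) m = ps_P Om A + ps_P Om B).
  { induction m as [|m IH]; [lia|]. destruct m; [simpl; ring|].
    rewrite tech5, IH by lia; simpl; rewrite P_empty; ring. }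
  rewrite Hpartial; unfold Rdist; rewrite Rminus_diag, Rabs_R0; auto.
Qed.

Lemma P_split A E : ps_meas Om A -> ps_meas Om E ->
  ps_P Om A = ps_P Om (fun w => A w /\ E w) + ps_P Om (fun w => A w /\ ~ E w).
Proof.
  intros HA HE; rewrite <- P_or.
  - apply P_ext; intros w; destruct (classic (E w)); tauto.
  - apply meas_and; auto.
  - apply meas_and; auto; apply meas_compl; auto.
  - tauto.
Qed.

Lemma P_mono A B : ps_meas Om A -> ps_meas Om B -> (forall w, A w -> B w) ->
  ps_P Om A <= ps_P Om B.
Proof.
  intros HA HB H; rewrite (P_split B A HB HA).
  rewrite (P_ext (fun w => B w /\ A w) A) by (intros w; split; [tauto | auto]).
  assert (0 <= ps_P Om (fun w => B w /\ ~ A w))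
    by (apply P_nonneg, meas_and; auto; apply meas_compl; auto).
  lra.
Qed.

Lemma P_le_1 A : ps_meas Om A -> ps_P Om A <= 1.
Proof. intros HA; rewrite <- (P_full Om); apply P_mono; auto using meas_full. Qed.

Lemma P_compl A : ps_meas Om A -> ps_P Om (fun w => ~ A w) = 1 - ps_P Om A.
Proof.
  intros HA; rewrite <- (P_full Om), (P_split (fun _ => True) A) by auto using meas_full.
  rewrite (P_ext (fun w => True /\ A w) A), (P_ext (fun w => True /\ ~ A w) (fun w => ~ A w))
    by tauto.
  ring.
Qed.

(* Continuity from below: the union of an increasing sequence of events is the
   limit of their probabilities (sigma-additivity applied to the increments). *)
Lemma P_increasing_union (A : nat -> ps_car Om -> Prop) :
  (forall m, ps_meas Om (A m)) -> (forall m w, A m w -> A (S m) w) ->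
  Un_cv (fun m => ps_P Om (A m)) (ps_P Om (fun w => exists m, A m w)).
Proof.
  intros HA Hinc.
  assert (Hmono : forall m m' w, (m <= m')%nat -> A m w -> A m' w)
    by (intros m m' w Hle; induction Hle; auto).
  set (D := fun m => match m with O => A O | S m' => fun w => A (S m') w /\ ~ A m' w end).
  assert (HD : forall m, ps_meas Om (D m)).
  { intros [|m]; simpl; auto. apply meas_and; auto; apply meas_compl; auto. }
  assert (HDdisj : forall m m' w, m <> m' -> D m w -> D m' w -> False).
  { assert (Hlt : forall m m' w, (m < m')%nat -> D m w -> D m' w -> False).
    { intros m [|m'] w Hlt H1 H2; [lia|]. destruct H2 as [_ H2].
      apply H2, (Hmono m); [lia|].
      destruct m; simpl in H1; tauto. }
    intros m m' w Hne H1 H2; destruct (Nat.lt_ge_cases m m'); eauto.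
    apply (Hlt m' m w); auto; lia. }
  assert (Hsum := P_sigma_add Om D HD HDdisj); cbv beta in Hsum.
  rewrite (P_ext (fun w => exists m, D m w) (fun w => exists m, A m w)) in Hsum.
  2:{ intros w; split.
      - intros [[|m] Hm]; simpl in Hm; [eauto | exists (S m); tauto].
      - intros [m Hm]; induction m as [|m IH]; [exists 0%nat; auto|].
        destruct (classic (A m w)); auto. exists (S m); simpl; auto. }
  assert (Hpartial : forall N, sum_f_R0 (fun m => ps_P Om (D m)) N = ps_P Om (A N)).
  { induction N as [|N IH]; [reflexivity|]. simpl sum_f_R0; rewrite IH.
    rewrite (P_split (A (S N)) (A N)), (P_ext (fun w => A (S N) w /\ A N w) (A N)) by
      (auto || (intros w; split; [tauto | auto])).
    simpl; ring. }
  intros eps Heps; destruct (Hsum eps Heps) as [N HN]; exists N; intros m Hm.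
  rewrite <- Hpartial; auto.
Qed.

End ProbabilityBasics.

Lemma small_inverse (x : R) : 0 < x -> exists M : nat, / (INR M + 1) < x.
Proof.
  intros Hx; destruct (INR_unbounded (/ x)) as [M HM]; exists M.
  pose proof (pos_INR M).
  rewrite <- (Rinv_inv x); apply Rinv_lt_contravar; [|lra].
  apply Rmult_lt_0_compat; [apply Rinv_0_lt_compat|]; lra.
Qed.

Lemma inv_succ_pos (M : nat) : 0 < / (INR M + 1).
Proof. apply Rinv_0_lt_compat; pose proof (pos_INR M); lra. Qed.

Lemma Rprod_ext (n : nat) (f g : nat -> R) :
  (forall i, (i < n)%nat -> f i = g i) -> Rprod_upto n f = Rprod_upto n g.
Proof. induction n as [|n IH]; intros H; simpl; [reflexivity | rewrite IH, H; auto]. Qed.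

Lemma Rprod_one (n : nat) : Rprod_upto n (fun _ => 1) = 1.
Proof. induction n as [|n IH]; simpl; [|rewrite IH]; ring. Qed.

Lemma Rprod_factor (n j : nat) (f : nat -> R) : (j < n)%nat ->
  Rprod_upto n f = f j * Rprod_upto n (fun i => if Nat.eqb i j then 1 else f i).
Proof.
  induction n as [|n IH]; intros Hj; [lia|]; simpl.
  destruct (Nat.eq_dec j n) as [->|Hne].
  - rewrite Nat.eqb_refl, (Rprod_ext n (fun i => if Nat.eqb i n then 1 else f i) f); [ring|].
    intros i Hi; destruct (Nat.eqb_spec i n); [lia | auto].
  - rewrite IH by lia; destruct (Nat.eqb_spec n j); [lia | ring].
Qed.

Lemma Rprod_nonneg (m : nat) (f : nat -> R) :
  (forall i, (i < m)%nat -> 0 <= f i) -> 0 <= Rprod_upto m f.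
Proof.
  induction m as [|m IH]; intros Hf; simpl; [lra|].
  apply Rmult_le_pos; [apply IH; auto | apply Hf; lia].
Qed.

Lemma Rprod_le (m : nat) (f g : nat -> R) :
  (forall i, (i < m)%nat -> 0 <= f i <= g i) -> Rprod_upto m f <= Rprod_upto m g.
Proof.
  induction m as [|m IH]; intros Hfg; simpl; [lra|].
  apply Rmult_le_compat; [apply Rprod_nonneg; intros i Hi; apply Hfg; lia
                         | apply Hfg; lia | apply IH; auto | apply Hfg; lia].
Qed.

Lemma Rprod_exp (m : nat) (h : nat -> R) :
  Rprod_upto m (fun i => exp (h i)) = exp (Rsum_upto m h).
Proof. induction m as [|m IH]; simpl; [rewrite exp_0 | rewrite IH, exp_plus]; auto. Qed.

Lemma Rprod_cv (n : nat) (u : nat -> nat -> R) (l : nat -> R) :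
  (forall i, (i < n)%nat -> Un_cv (u i) (l i)) ->
  Un_cv (fun M => Rprod_upto n (fun i => u i M)) (Rprod_upto n l).
Proof.
  induction n as [|n IH]; intros Hcv; simpl.
  - intros eps Heps; exists 0%nat; intros; unfold Rdist; rewrite Rminus_diag, Rabs_R0; lra.
  - apply CV_mult; auto.
Qed.

Lemma Rsum_scal (m : nat) (c : R) (f : nat -> R) :
  Rsum_upto m (fun i => c * f i) = c * Rsum_upto m f.
Proof. induction m as [|m IH]; simpl; [|rewrite IH]; ring. Qed.

Lemma Rsum_le (m : nat) (f g : nat -> R) :
  (forall i, (i < m)%nat -> f i <= g i) -> Rsum_upto m f <= Rsum_upto m g.
Proof.
  induction m as [|m IH]; intros Hfg; simpl; [lra|].
  assert (f m <= g m) by (apply Hfg; lia).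
  assert (Rsum_upto m f <= Rsum_upto m g) by (apply IH; auto). lra.
Qed.

Lemma Rsum_one_minus (m : nat) (g : nat -> R) :
  Rsum_upto m (fun i => 1 - g i) = INR m - Rsum_upto m g.
Proof. induction m as [|m IH]; simpl Rsum_upto; [simpl; ring | rewrite IH, S_INR; ring]. Qed.

Section RandomVariables.
Variable Om : ProbSpace.
Implicit Type Y : ps_car Om -> R.

Lemma cdf_bounds Y c : random_variable Om Y -> 0 <= cdf Om Y c <= 1.
Proof. intros HY; split; [apply P_nonneg | apply P_le_1]; apply HY. Qed.

Lemma cdf_mono Y c d : random_variable Om Y -> c <= d -> cdf Om Y c <= cdf Om Y d.
Proof. intros HY Hcd; apply P_mono; try apply HY; intros; lra. Qed.

Lemma cdf_to_1 Y : random_variable Om Y -> Un_cv (fun M => cdf Om Y (INR M)) 1.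
Proof.
  intros HY; rewrite <- (P_full Om).
  rewrite (P_ext Om (fun _ => True) (fun w => exists M, Y w <= INR M)).
  - apply (P_increasing_union Om (fun M w => Y w <= INR M)); [intros M; apply HY|].
    intros M w HM; rewrite S_INR; lra.
  - intros w; split; auto; intros _.
    destruct (INR_unbounded (Y w)) as [M HM]; exists M; lra.
Qed.

(* [{Y < c}] is the union of the events [{Y <= c - 1/(M+1)}]. *)
Lemma meas_lt Y c : random_variable Om Y -> ps_meas Om (fun w => Y w < c).
Proof.
  intros HY; apply (meas_ext Om (fun w => exists M : nat, Y w <= c - / (INR M + 1))).
  - intros w; split.
    + intros [M HM]; pose proof (inv_succ_pos M); lra.
    + intros Hlt; destruct (small_inverse (c - Y w)) as [M HM]; [lra|].
      exists M; lra.
  - apply meas_union; intros M; apply HY.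
Qed.

Lemma survival_right_limit Y a b : random_variable Om Y ->
  (forall c, a < c -> ps_P Om (fun w => ~ Y w <= c) <= b) ->
  ps_P Om (fun w => ~ Y w <= a) <= b.
Proof.
  intros HY Hb.
  set (A := fun (M : nat) w => ~ Y w <= a + / (INR M + 1)).
  assert (Hunion : Un_cv (fun M => ps_P Om (A M)) (ps_P Om (fun w => exists M, A M w))).
  { apply P_increasing_union.
    - intros M; apply meas_compl, HY.
    - intros M w HM Hle; apply HM; eapply Rle_trans; [exact Hle|].
      apply Rplus_le_compat_l, Rinv_le_contravar; [|rewrite S_INR; lra].
      pose proof (pos_INR M); lra. }
  rewrite (P_ext Om (fun w => exists M, A M w) (fun w => ~ Y w <= a)) in Hunion.
  - apply (Rle_cv_lim (Un := fun M => ps_P Om (A M)) (Vn := fun _ => b)); [|exact Hunion|].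
    + intros M; apply Hb; pose proof (inv_succ_pos M); lra.
    + intros eps Heps; exists 0%nat; intros; unfold Rdist; rewrite Rminus_diag, Rabs_R0; lra.
  - intros w; split.
    + intros [M HM] Hle; apply HM; pose proof (inv_succ_pos M); lra.
    + intros Hgt; destruct (small_inverse (Y w - a)) as [M HM]; [lra|].
      exists M; unfold A; lra.
Qed.

Lemma meas_forall_lt n (E : nat -> ps_car Om -> Prop) :
  (forall i, (i < n)%nat -> ps_meas Om (E i)) ->
  ps_meas Om (fun w => forall i, (i < n)%nat -> E i w).
Proof.
  induction n as [|n IH]; intros HE.
  - apply (meas_ext Om (fun _ => True)); [intros w; split; intros; auto; lia | apply meas_full].
  - apply (meas_ext Om (fun w => (forall i, (i < n)%nat -> E i w) /\ E n w)).
    + intros w; split.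
      * intros [H1 H2] i Hi; destruct (Nat.eq_dec i n); [subst; auto | apply H1; lia].
      * intros H; split; auto.
    + apply meas_and; auto.
Qed.

End RandomVariables.

Lemma finite_family_bounded (x : nat -> R) (n : nat) :
  exists M : nat, forall i, (i < n)%nat -> x i <= INR M.
Proof.
  induction n as [|n [M HM]]; [exists 0%nat; intros; lia|].
  destruct (INR_unbounded (x n)) as [M' HM'].
  exists (Nat.max M M'); intros i Hi.
  assert (INR M <= INR (Nat.max M M') /\ INR M' <= INR (Nat.max M M')) as [H1 H2]
    by (split; apply le_INR; lia).
  destruct (Nat.eq_dec i n); [subst; lra|]. specialize (HM i ltac:(lia)); lra.
Qed.

(* Independence, stated for the joint cdf, yields the product rule for the
   events [{X_i <= c}] over any subfamily [T]: let the thresholds of the indices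
   outside [T] tend to infinity. *)
Lemma independent_subfamily (Om : ProbSpace) (n : nat) (X : nat -> ps_car Om -> R)
  (c : R) (T : nat -> bool) :
  (forall i, (i < n)%nat -> random_variable Om (X i)) -> independent Om n X ->
  ps_P Om (fun w => forall i, (i < n)%nat -> T i = true -> X i w <= c)
  = Rprod_upto n (fun i => if T i then cdf Om (X i) c else 1).
Proof.
  intros Hrv Hind.
  set (a := fun (M i : nat) => if T i then c else INR M).
  apply (UL_sequence (fun M => ps_P Om (fun w => forall i, (i < n)%nat -> X i w <= a M i))).
  - rewrite (P_ext Om _ (fun w => exists M, forall i, (i < n)%nat -> X i w <= a M i)).
    + apply (P_increasing_union Om (fun M w => forall i, (i < n)%nat -> X i w <= a M i)).
      * intros M; apply meas_forall_lt; intros i Hi; apply Hrv; auto.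
      * intros M w H i Hi; specialize (H i Hi); unfold a in *.
        destruct (T i); auto; rewrite S_INR; lra.
    + intros w; split.
      * intros H; destruct (finite_family_bounded (fun i => X i w) n) as [M HM].
        exists M; intros i Hi; unfold a; destruct (T i) eqn:HT; auto.
      * intros [M HM] i Hi HT; specialize (HM i Hi); unfold a in HM; rewrite HT in HM; auto.
  - apply (Un_cv_ext (fun M => Rprod_upto n (fun i => cdf Om (X i) (a M i))));
      [intros M; symmetry; apply Hind|].
    apply Rprod_cv; intros i Hi; unfold a; destruct (T i).
    + intros eps Heps; exists 0%nat; intros; unfold Rdist; rewrite Rminus_diag, Rabs_R0; lra.
    + apply cdf_to_1, Hrv; auto.
Qed.

(* [at_least E m j w]: at least [j] of the events [E 0, ..., E (m-1)] occur at [w].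
   It unfolds along the last index, as does the matching probability
   [tail_poly p m j] for independent events of probabilities [p i]. *)
Fixpoint at_least {T : Type} (E : nat -> T -> Prop) (m j : nat) (w : T) : Prop :=
  match m, j with
  | _, O => True
  | O, S _ => False
  | S m', S j' => (E m' w /\ at_least E m' j' w) \/ (~ E m' w /\ at_least E m' (S j') w)
  end.

Fixpoint tail_poly (p : nat -> R) (m j : nat) : R :=
  match m, j with
  | _, O => 1
  | O, S _ => 0
  | S m', S j' => p m' * tail_poly p m' j' + (1 - p m') * tail_poly p m' (S j')
  end.

Section CountingEvents.
Variables (Om : ProbSpace) (n : nat) (E : nat -> ps_car Om -> Prop) (p : nat -> R).
Hypothesis meas_E : forall i, (i < n)%nat -> ps_meas Om (E i).

(* The events indexed by the subfamily [T] all occur; under independence this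
   has probability [subfamily_weight T]. *)
Definition all_occur (T : nat -> bool) (w : ps_car Om) : Prop :=
  forall i, (i < n)%nat -> T i = true -> E i w.

Definition subfamily_weight (T : nat -> bool) : R :=
  Rprod_upto n (fun i => if T i then p i else 1).

Definition add_index (T : nat -> bool) (m : nat) : nat -> bool :=
  fun i => (Nat.eqb i m || T i)%bool.

Lemma meas_all_occur T : ps_meas Om (all_occur T).
Proof.
  apply meas_forall_lt; intros i Hi.
  destruct (T i); [apply (meas_ext Om (E i)); [intros; split; auto|auto]|].
  apply (meas_ext Om (fun _ => True)); [intros; split; auto; discriminate | apply meas_full].
Qed.

Lemma meas_at_least m j : (m <= n)%nat -> ps_meas Om (at_least E m j).
Proof.
  revert j; induction m as [|m IH]; intros [|j] Hm; simpl;
    auto using meas_full, meas_empty.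
  apply meas_or; apply meas_and; auto using meas_compl with arith.
Qed.

Lemma all_occur_add T m w : (m < n)%nat ->
  all_occur (add_index T m) w <-> all_occur T w /\ E m w.
Proof.
  intros Hm; unfold all_occur, add_index; split.
  - intros H; split.
    + intros i Hi HT; apply H; [auto | rewrite HT, Bool.orb_true_r; auto].
    + apply H; [auto | rewrite Nat.eqb_refl; auto].
  - intros [H HEm] i Hi HT; destruct (Nat.eqb_spec i m) as [->|]; auto.
Qed.

Lemma subfamily_weight_add T m : (m < n)%nat -> T m = false ->
  subfamily_weight (add_index T m) = p m * subfamily_weight T.
Proof.
  intros Hm HTm; unfold subfamily_weight, add_index.
  rewrite (Rprod_factor n m _ Hm), (Rprod_factor n m (fun i => if T i then p i else 1) Hm).
  rewrite Nat.eqb_refl, HTm; simpl; rewrite Rmult_1_l.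
  f_equal; apply Rprod_ext; intros i Hi; destruct (Nat.eqb_spec i m); auto.
Qed.

Hypothesis indep_E : forall T, ps_P Om (all_occur T) = subfamily_weight T.

(* Conditioning on the last event [E m]: the probability of "at least [j]
   among the first [m]" jointly with any subfamily above [m] obeys the
   recursion of [tail_poly]. The complement [~ E m] is handled through
   [P(B /\ ~ E m) = P(B) - P(B /\ E m)], so only the product rule for
   subfamilies is needed. *)
Lemma at_least_all_occur_prob m j T : (m <= n)%nat -> (forall i, (i < m)%nat -> T i = false) ->
  ps_P Om (fun w => at_least E m j w /\ all_occur T w) = tail_poly p m j * subfamily_weight T.
Proof.
  revert j T; induction m as [|m IH]; intros [|j] T Hm HT.
  - rewrite Rmult_1_l, <- indep_E; apply P_ext; simpl; tauto.
  - rewrite (P_ext Om _ (fun _ => False)), P_empty by (simpl; tauto); simpl; ring.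
  - rewrite Rmult_1_l, <- indep_E; apply P_ext; simpl; tauto.
  - assert (HTm : T m = false) by auto.
    assert (HT' : forall i, (i < m)%nat -> add_index T m i = false).
    { intros i Hi; unfold add_index; rewrite HT by lia.
      destruct (Nat.eqb_spec i m); [lia | auto]. }
    assert (Hocc := fun w => all_occur_add T m w ltac:(lia)).
    assert (Hmeas : forall j, ps_meas Om (fun w => at_least E m j w /\ all_occur T w))
      by (intros; apply meas_and; auto using meas_all_occur, meas_at_least with arith).
    rewrite (P_ext Om _ (fun w => (at_least E m j w /\ all_occur (add_index T m) w)
        \/ (at_least E m (S j) w /\ all_occur T w /\ ~ E m w)))
      by (intros w; rewrite Hocc; simpl; tauto).
    rewrite P_or; [| apply meas_and; auto using meas_all_occur, meas_at_least with arith
                   | apply meas_and; [|apply meas_and]; auto using meas_all_occur, meas_compl,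
                       meas_at_least with arith
                   | intros w; rewrite Hocc; tauto].
    assert (Hsplit := P_split Om _ (E m) (Hmeas (S j)) (meas_E m ltac:(lia))); cbv beta in Hsplit.
    rewrite (P_ext Om (fun w => (at_least E m (S j) w /\ all_occur T w) /\ E m w)
               (fun w => at_least E m (S j) w /\ all_occur (add_index T m) w)) in Hsplit
      by (intros w; rewrite Hocc; tauto).
    rewrite (P_ext Om (fun w => at_least E m (S j) w /\ all_occur T w /\ ~ E m w)
               (fun w => (at_least E m (S j) w /\ all_occur T w) /\ ~ E m w)) by tauto.
    rewrite !IH, subfamily_weight_add in * by (auto with arith).
    simpl; lra.
Qed.

Lemma at_least_prob j : ps_P Om (at_least E n j) = tail_poly p n j.
Proof.
  assert (Hw : subfamily_weight (fun _ => false) = 1) by exact (Rprod_one n).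
  rewrite <- (Rmult_1_r (tail_poly p n j)), <- Hw, <- at_least_all_occur_prob by auto.
  apply P_ext; intros w; unfold all_occur; split; [|tauto]; intros H; split; auto; discriminate.
Qed.

End CountingEvents.

Lemma tail_poly_beyond (p : nat -> R) (m j : nat) : (m < j)%nat -> tail_poly p m j = 0.
Proof.
  revert j; induction m as [|m IH]; intros [|j] Hj; simpl; try lia; [reflexivity|].
  rewrite !IH by lia; ring.
Qed.

Lemma tail_poly_0 (p : nat -> R) (m : nat) : tail_poly p m 0 = 1.
Proof. destruct m; reflexivity. Qed.

Lemma tail_poly_SS (p : nat -> R) (m j : nat) :
  tail_poly p (S m) (S j) = p m * tail_poly p m j + (1 - p m) * tail_poly p m (S j).
Proof. reflexivity. Qed.

(* "At most [j-1] successes" is "at least [m+1-j] failures": the tail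
   polynomial of the complementary probabilities. *)
Lemma tail_poly_compl (p : nat -> R) (m j : nat) :
  1 - tail_poly p m j = tail_poly (fun i => 1 - p i) m (S m - j).
Proof.
  revert j; induction m as [|m IH]; intros [|j]; try (simpl; ring).
  - rewrite Nat.sub_0_r, (tail_poly_beyond _ (S m) (S (S m))), tail_poly_0 by lia; ring.
  - rewrite Nat.sub_succ, tail_poly_SS.
    destruct (Nat.le_gt_cases j m) as [Hjm|Hjm].
    + assert (IH1 := IH j); assert (IH2 := IH (S j)); rewrite Nat.sub_succ in IH2.
      replace (S m - j)%nat with (S (m - j)) in * by lia.
      rewrite tail_poly_SS, <- IH1, <- IH2; ring.
    + rewrite (tail_poly_beyond p m j), (tail_poly_beyond p m (S j)) by lia.
      replace (S m - j)%nat with 0%nat by lia; rewrite tail_poly_0; ring.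
Qed.

(* Exponential Markov inequality for the number of successes among independent
   trials, in polynomial form: [P(N >= j) z^j <= E z^N]. *)
Lemma tail_poly_mgf (p : nat -> R) (z : R) (m j : nat) : 1 <= z ->
  (forall i, (i < m)%nat -> 0 <= p i <= 1) ->
  tail_poly p m j * z ^ j <= Rprod_upto m (fun i => 1 - p i + p i * z).
Proof.
  intros Hz; revert j; induction m as [|m IH]; intros [|j] Hp; simpl; try lra.
  - assert (H0 := IH 0%nat (fun i Hi => Hp i ltac:(lia))); rewrite tail_poly_0 in H0.
    destruct (Hp m ltac:(lia)).
    assert (1 <= 1 - p m + p m * z) by nra; nra.
  - assert (H1 := IH j (fun i Hi => Hp i ltac:(lia))).
    assert (H2 := IH (S j) (fun i Hi => Hp i ltac:(lia))); simpl in H2.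
    destruct (Hp m ltac:(lia)) as [Hp0 Hp1].
    set (Q := Rprod_upto m (fun i => 1 - p i + p i * z)) in *.
    assert (p m * z * (tail_poly p m j * z ^ j) <= p m * z * Q)
      by (apply Rmult_le_compat_l; nra).
    assert ((1 - p m) * (tail_poly p m (S j) * (z * z ^ j)) <= (1 - p m) * Q)
      by (apply Rmult_le_compat_l; lra).
    nra.
Qed.

(* [odds_dom c a b]: the odds of [b] are at least [c] times the odds of [a],
   written without division so that it also covers the values 0 and 1. *)
Definition odds_dom (c a b : R) : Prop := c * a * (1 - b) <= b * (1 - a).

Lemma odds_dom_refl (a : R) : odds_dom 1 a a.
Proof. unfold odds_dom; lra. Qed.

Lemma odds_dom_trans (c d a b e : R) : 0 < c -> 0 < d ->
  0 <= a <= 1 -> 0 <= b <= 1 -> 0 <= e <= 1 ->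
  odds_dom c a b -> odds_dom d b e -> odds_dom (c * d) a e.
Proof.
  unfold odds_dom; intros Hc Hd Ha Hb He H1 H2.
  destruct (Req_dec b 1) as [->|Hb1].
  - assert (e = 1) as -> by nra; lra.
  - assert (c * a * (1 - b) * (d * (1 - e)) <= b * (1 - a) * (d * (1 - e)))
      by (apply Rmult_le_compat_r; nra).
    assert (d * b * (1 - e) * (1 - a) <= e * (1 - b) * (1 - a))
      by (apply Rmult_le_compat_r; lra).
    apply (Rmult_le_reg_l (1 - b)); [lra | nra].
Qed.

Lemma odds_dom_mono (c a a' b b' : R) : 0 <= c ->
  0 <= a' <= a -> a <= 1 -> 0 <= b <= b' -> b' <= 1 ->
  odds_dom c a b -> odds_dom c a' b'.
Proof.
  unfold odds_dom; intros Hc Ha Ha1 Hb Hb1 H.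
  assert (c * a' * (1 - b') <= c * a * (1 - b)).
  { apply Rmult_le_compat; try nra; apply Rmult_le_compat_l; lra. }
  nra.
Qed.

Lemma odds_dom_compl (c a b : R) : odds_dom c a b -> odds_dom c (1 - b) (1 - a).
Proof. unfold odds_dom; intros H; lra. Qed.

Lemma condC_odds_dom (F : R -> R) (K t : R) : (forall s, 0 <= F s <= 1) ->
  condC F K -> 0 < t -> odds_dom 2 (F t) (F (K * t)).
Proof.
  intros HF HC Ht; specialize (HC t Ht).
  assert (Ha := HF t); assert (Hb := HF (K * t)); unfold odds_dom.
  set (a := F t) in *; set (b := F (K * t)) in *.
  unfold odds in HC.
  destruct (Req_EM_T b 1) as [->|Hb1]; [lra|].
  destruct (Req_EM_T a 1) as [->|Ha1]; simpl in HC; [contradiction|].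
  assert (Hab : 2 * (a / (1 - a)) * ((1 - a) * (1 - b)) <= b / (1 - b) * ((1 - a) * (1 - b)))
    by (apply Rmult_le_compat_r; nra).
  replace (2 * (a / (1 - a)) * ((1 - a) * (1 - b))) with (2 * a * (1 - b)) in Hab
    by (field; lra).
  replace (b / (1 - b) * ((1 - a) * (1 - b))) with (b * (1 - a)) in Hab by (field; lra).
  exact Hab.
Qed.

Lemma condC_iterate (F : R -> R) (K s : R) (m : nat) : 0 < K ->
  (forall s, 0 <= F s <= 1) -> condC F K -> 0 < s ->
  odds_dom (2 ^ m) (F s) (F (K ^ m * s)).
Proof.
  intros HK HF HC Hs; induction m as [|m IH].
  - rewrite pow_O, Rmult_1_l; apply odds_dom_refl.
  - replace (2 ^ S m) with (2 ^ m * 2) by (simpl; ring).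
    replace (K ^ S m * s) with (K * (K ^ m * s)) by (simpl; ring).
    apply (odds_dom_trans _ _ _ (F (K ^ m * s))); auto using pow_lt with real.
    apply condC_odds_dom; auto.
    apply Rmult_lt_0_compat; auto using pow_lt.
Qed.

Lemma exp_le (x y : R) : x <= y -> exp x <= exp y.
Proof. intros [H|H]; [apply Rlt_le, exp_increasing; auto | rewrite H; right; reflexivity]. Qed.

Lemma exp_INR_ln2 (m : nat) : exp (INR m * ln 2) = 2 ^ m.
Proof. rewrite <- ln_pow, exp_ln by (try apply pow_lt; lra); reflexivity. Qed.

Lemma exp_tangent (x y : R) : exp x * (1 + y - x) <= exp y.
Proof.
  replace y with (x + (y - x)) at 2 by ring; rewrite exp_plus.
  apply Rmult_le_compat_l; [apply Rlt_le, exp_pos|].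
  pose proof (exp_ineq1_le (y - x)); lra.
Qed.

(* Convexity of [exp] between 0 and [x]. *)
Lemma exp_chord (b x : R) : 0 <= b <= 1 -> exp (b * x) <= 1 - b + b * exp x.
Proof.
  intros Hb.
  assert (H0 := exp_tangent (b * x) 0); assert (H1 := exp_tangent (b * x) x).
  rewrite exp_0 in H0.
  assert ((1 - b) * (exp (b * x) * (1 + 0 - b * x)) <= (1 - b) * 1)
    by (apply Rmult_le_compat_l; lra).
  assert (b * (exp (b * x) * (1 + x - b * x)) <= b * exp x)
    by (apply Rmult_le_compat_l; lra).
  nra.
Qed.

Lemma mgf_factor_bound (lam a b : R) : 0 <= lam -> 0 <= a <= 1 -> 0 <= b <= 1 ->
  odds_dom (exp lam) a b -> 1 - a + a * exp lam <= exp (lam * b).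
Proof.
  unfold odds_dom; intros Hlam Ha Hb Hdom.
  set (z := exp lam) in *.
  assert (Hz : 1 <= z) by (unfold z; pose proof (exp_ineq1_le lam); lra).
  set (D := b + z * (1 - b)).
  assert (HD : 0 < D) by (unfold D; nra).
  assert (Hnum : (1 - a + a * z) * D <= z) by (unfold D; nra).
  assert (Hchord := exp_chord b (- lam) Hb).
  rewrite exp_Ropp in Hchord; fold z in Hchord.
  assert (Hden : exp (b * - lam) * z <= D).
  { unfold D; apply (Rmult_le_compat_r z) in Hchord; [|lra].
    replace ((1 - b + b * / z) * z) with (b + z * (1 - b)) in Hchord by (field; lra); lra. }
  assert (Hinv : exp (lam * b) * exp (b * - lam) = 1)
    by (rewrite <- exp_plus, <- exp_0; f_equal; ring).
  pose proof (exp_pos (lam * b)); pose proof (exp_pos (b * - lam)).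
  assert ((1 - a + a * z) * exp (b * - lam) <= 1).
  { apply (Rmult_le_reg_l D); [exact HD|]. nra. }
  nra.
Qed.

Lemma tail_poly_chernoff (p f : nat -> R) (lam : R) (m j : nat) : 0 <= lam ->
  (forall i, (i < m)%nat ->
     0 <= p i <= 1 /\ 0 <= f i <= 1 /\ odds_dom (exp lam) (p i) (f i)) ->
  Rsum_upto m f <= INR j - 1/2 ->
  tail_poly p m j <= exp (- lam / 2).
Proof.
  intros Hlam Hpf Hsum.
  assert (Hz : 1 <= exp lam) by (pose proof (exp_ineq1_le lam); lra).
  assert (Hmgf := tail_poly_mgf p (exp lam) m j Hz (fun i Hi => proj1 (Hpf i Hi))).
  assert (Hfactors : Rprod_upto m (fun i => 1 - p i + p i * exp lam)
                     <= Rprod_upto m (fun i => exp (lam * f i))).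
  { apply Rprod_le; intros i Hi; destruct (Hpf i Hi) as [Hp [Hf Hd]].
    split; [nra | apply mgf_factor_bound; auto]. }
  rewrite Rprod_exp, Rsum_scal in Hfactors.
  assert (Hexp : exp (lam * Rsum_upto m f) <= exp (INR j * lam) * exp (- lam / 2)).
  { rewrite <- exp_plus; apply exp_le; nra. }
  assert (Hpow : exp lam ^ j = exp (INR j * lam)).
  { rewrite <- Rpower_pow by apply exp_pos; unfold Rpower; rewrite ln_exp; auto. }
  rewrite Hpow in Hmgf; pose proof (exp_pos (INR j * lam)).
  apply (Rmult_le_reg_r (exp (INR j * lam))); [auto | nra].
Qed.

Fixpoint count_le (c : R) (l : list R) : nat :=
  match l with
  | nil => O
  | x :: l' => ((if Rle_dec x c then 1 else 0) + count_le c l')%nat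
  end.

Lemma count_le_app (c : R) (l1 l2 : list R) :
  count_le c (l1 ++ l2) = (count_le c l1 + count_le c l2)%nat.
Proof. induction l1 as [|x l1 IH]; simpl; [|rewrite IH]; lia. Qed.

Lemma count_le_above (c a : R) (l : list R) :
  c < a -> Forall (Rle a) l -> count_le c l = 0%nat.
Proof.
  intros Hca Hl; induction Hl as [|x l Hx Hl IH]; simpl; auto.
  destruct (Rle_dec x c); [lra | auto].
Qed.

Lemma insert_sorted_In (x y : R) (l : list R) :
  In y (insert_sorted x l) <-> x = y \/ In y l.
Proof.
  induction l as [|a l IH]; simpl; [tauto|].
  destruct (Rle_dec x a); simpl; [tauto | rewrite IH; tauto].
Qed.

Lemma insert_sorted_sorted (x : R) (l : list R) :
  StronglySorted Rle l -> StronglySorted Rle (insert_sorted x l).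
Proof.
  induction l as [|a l IH]; simpl; intros Hs.
  - repeat constructor.
  - apply StronglySorted_inv in Hs as [Hs Ha]; rewrite Forall_forall in Ha.
    destruct (Rle_dec x a) as [Hxa|Hxa]; constructor.
    + constructor; [auto | rewrite Forall_forall; auto].
    + rewrite Forall_forall; intros y [<-|Hy]; [auto | specialize (Ha y Hy); lra].
    + apply IH; auto.
    + rewrite Forall_forall; intros y Hy; apply insert_sorted_In in Hy as [<-|Hy]; auto; lra.
Qed.

Lemma insert_sorted_count (c x : R) (l : list R) :
  count_le c (insert_sorted x l) = count_le c (x :: l).
Proof.
  induction l as [|a l IH]; simpl; auto.
  destruct (Rle_dec x a); simpl; auto; rewrite IH; simpl; lia.
Qed.

Lemma insert_sorted_length (x : R) (l : list R) :
  length (insert_sorted x l) = S (length l).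
Proof. induction l as [|a l IH]; simpl; auto; destruct (Rle_dec x a); simpl; auto. Qed.

Lemma isort_spec (l : list R) :
  StronglySorted Rle (isort l) /\ (forall c, count_le c (isort l) = count_le c l)
  /\ length (isort l) = length l /\ (forall y, In y (isort l) -> In y l).
Proof.
  induction l as [|x l [Hs [Hc [Hl Hin]]]]; simpl; [repeat split; auto using SSorted_nil|].
  repeat split.
  - apply insert_sorted_sorted; auto.
  - intros c; rewrite insert_sorted_count; simpl; rewrite Hc; auto.
  - rewrite insert_sorted_length, Hl; auto.
  - intros y Hy; apply insert_sorted_In in Hy as [|]; auto.
Qed.

Lemma sorted_nth_le (c : R) (l : list R) : StronglySorted Rle l ->
  forall j, (j < length l)%nat -> (nth j l 0 <= c <-> (j < count_le c l)%nat).
Proof.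
  induction l as [|a l IH]; simpl; intros Hs j Hj; [lia|].
  apply StronglySorted_inv in Hs as [Hs Ha].
  destruct (Rle_dec a c) as [Hac|Hac].
  - destruct j as [|j]; [split; auto; lia|]. rewrite IH by (auto; lia); lia.
  - rewrite (count_le_above c a l) by (auto; lra); simpl.
    split; [|lia]. intros Hjc; exfalso.
    destruct j as [|j]; [lra|].
    rewrite Forall_forall in Ha; assert (a <= nth j l 0) by (apply Ha, nth_In; lia); lra.
Qed.

Lemma kmin_le_iff (c : R) (k : nat) (l : list R) : (1 <= k)%nat -> (k <= length l)%nat ->
  (kmin k l <= c <-> (k <= count_le c l)%nat).
Proof.
  intros Hk1 Hkl; destruct (isort_spec l) as [Hs [Hc [Hl _]]]; unfold kmin.
  rewrite sorted_nth_le by (auto; lia); rewrite Hc; lia.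
Qed.

Lemma kmin_nonneg (k : nat) (l : list R) : (forall y, In y l -> 0 <= y) -> 0 <= kmin k l.
Proof.
  intros Hl; destruct (isort_spec l) as [_ [_ [_ Hin]]]; unfold kmin.
  destruct (nth_in_or_default (k - 1) (isort l) 0) as [Hy| ->]; [auto | lra].
Qed.

Lemma at_least_count {T : Type} (X : nat -> T -> R) (c : R) (w : T) (m j : nat) :
  at_least (fun i w => X i w <= c) m j w <->
  (j <= count_le c (map (fun i => X i w) (seq 0 m)))%nat.
Proof.
  revert j; induction m as [|m IH]; intros [|j]; try (simpl; split; auto; lia).
  rewrite seq_S, map_app, count_le_app; simpl; rewrite !IH.
  destruct (Rle_dec (X m w) c) as [Hle|Hgt]; split.
  - intros [[_ H]|[H _]]; [lia | contradiction].
  - intros H; left; split; [auto | lia].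
  - intros [[H _]|[_ H]]; [contradiction | lia].
  - intros H; right; split; [auto | lia].
Qed.

(* The Chernoff bound with [lam = m ln 2], i.e. [2^(-m/2)]. *)
Definition chernoff_rate (m : nat) : R := exp (- (INR m * ln 2) / 2).

Lemma chernoff_rate_small (m : nat) : (9 <= m)%nat -> chernoff_rate m < 1/2.
Proof.
  intros Hm; apply le_INR in Hm; simpl in Hm; unfold chernoff_rate.
  assert (Hl2 := ln_lt_2).
  assert (Hx : 1 < INR m * ln 2 / 2) by nra.
  assert (H2 := exp_ineq1 (INR m * ln 2 / 2) ltac:(lra)).
  replace (- (INR m * ln 2) / 2) with (- (INR m * ln 2 / 2)) by field.
  rewrite exp_Ropp; apply (Rmult_lt_reg_l (exp (INR m * ln 2 / 2))); [apply exp_pos|].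
  rewrite Rinv_r by (apply exp_neq_0); lra.
Qed.

Lemma pow_bracket (K y : R) : 1 < K -> 1 < y -> exists m : nat, K ^ m < y <= K ^ S m.
Proof.
  intros HK Hy.
  destruct (Pow_x_infinity K ltac:(rewrite Rabs_right; lra) y) as [N HN].
  specialize (HN N (le_n N)); rewrite Rabs_right in HN by (apply Rle_ge, pow_le; lra).
  induction N as [|N IH]; [simpl in HN; lra|].
  destruct (Rlt_or_le (K ^ N) y) as [HNy|HNy]; [exists N; split; lra | apply IH; lra].
Qed.

Lemma chernoff_rate_le_power (K y r : R) (m : nat) : 1 < K -> 4 <= r -> 0 < y <= K ^ S m ->
  chernoff_rate m <= 4 * Rpower y (- (1 / (r * ln K))).
Proof.
  intros HK Hr [Hy HyK]; unfold chernoff_rate, Rpower.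
  assert (HlnK : 0 < ln K) by (rewrite <- ln_1; apply ln_increasing; lra).
  assert (Hlny : ln y <= INR (S m) * ln K).
  { rewrite <- ln_pow by lra; destruct HyK as [HyK| ->]; [|lra].
    apply Rlt_le, ln_increasing; auto. }
  rewrite S_INR in Hlny; assert (Hl2 := ln_lt_2); pose proof (pos_INR m).
  assert (H1 : - (INR m * ln 2) / 2 <= - (INR m + 1) / r + 1 / r).
  { assert (Hr' : 1 / r <= 1 / 4)
      by (unfold Rdiv; rewrite !Rmult_1_l; apply Rinv_le_contravar; lra).
    replace (- (INR m + 1) / r + 1 / r) with (- (INR m * (1 / r))) by (field; lra).
    nra. }
  assert (H2 : - (INR m + 1) / r <= - (1 / (r * ln K)) * ln y).
  { apply (Rmult_le_reg_l (r * ln K)); [nra|].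
    replace (r * ln K * (- (INR m + 1) / r)) with (- ((INR m + 1) * ln K)) by (field; lra).
    replace (r * ln K * (- (1 / (r * ln K)) * ln y)) with (- ln y) by (field; lra). lra. }
  assert (H3 : exp (1 / r) <= 3).
  { apply Rle_trans with (exp 1); [apply exp_le | apply exp_le_3].
    apply (Rmult_le_reg_l r); [lra|]; field_simplify; lra. }
  apply Rle_trans with (exp (- (INR m + 1) / r) * exp (1 / r)); [rewrite <- exp_plus; apply exp_le; lra|].
  assert (exp (- (INR m + 1) / r) <= exp (- (1 / (r * ln K)) * ln y)) by (apply exp_le; lra).
  pose proof (exp_pos (- (INR m + 1) / r)); pose proof (exp_pos (1 / r)); nra.
Qed.

Section KthMinimum.
Variables (K : R) (k n : nat) (Om : ProbSpace) (X : nat -> ps_car Om -> R).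
Hypotheses (HK : 1 < K) (Hk1 : (1 <= k)%nat) (Hkn : (k <= n)%nat)
  (Hrv : forall i, (i < n)%nat -> random_variable Om (X i))
  (Hind : independent Om n X)
  (HC : forall i, (i < n)%nat -> condC (cdf Om (X i)) K).

Definition kth_min (w : ps_car Om) : R := kmin k (map (fun i => X i w) (seq 0 n)).

Lemma kth_min_le_iff (c : R) (w : ps_car Om) :
  kth_min w <= c <-> at_least (fun i w => X i w <= c) n k w.
Proof.
  unfold kth_min; rewrite kmin_le_iff, at_least_count; [tauto | auto |].
  rewrite length_map, length_seq; auto.
Qed.

Lemma kth_min_rv : random_variable Om kth_min.
Proof.
  intros c; apply (meas_ext Om (at_least (fun i w => X i w <= c) n k)).
  - intros w; rewrite kth_min_le_iff; tauto.
  - apply (meas_at_least Om n); auto; intros i Hi; apply Hrv; auto.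
Qed.

Lemma kth_min_cdf (c : R) :
  ps_P Om (fun w => kth_min w <= c) = tail_poly (fun i => cdf Om (X i) c) n k.
Proof.
  rewrite (P_ext Om _ (at_least (fun i w => X i w <= c) n k)) by (intros; apply kth_min_le_iff).
  apply at_least_prob; [intros i Hi; apply Hrv; auto|].
  intros T; apply independent_subfamily; auto.
Qed.

Lemma cdf_X_bounds (i : nat) (s : R) : (i < n)%nat -> 0 <= cdf Om (X i) s <= 1.
Proof. intros Hi; apply cdf_bounds, Hrv, Hi. Qed.

Lemma kth_min_lower_core (m : nat) (c : R) : 0 < c ->
  Rsum_upto n (fun i => cdf Om (X i) (K ^ m * c)) <= INR k - 1/2 ->
  ps_P Om (fun w => kth_min w <= c) <= chernoff_rate m.
Proof.
  intros Hc Hsum; rewrite kth_min_cdf; unfold chernoff_rate.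
  apply (tail_poly_chernoff _ (fun i => cdf Om (X i) (K ^ m * c))); auto.
  - pose proof (pos_INR m); pose proof ln_lt_2; nra.
  - intros i Hi; rewrite exp_INR_ln2; repeat split; try apply cdf_X_bounds; auto.
    apply condC_iterate; auto; [lra | intros; apply cdf_X_bounds; auto].
Qed.

(* Upper tail: if the average cdf at [s] reaches the target level and
   [K^m s <= c], then [P{kth_min > c} <= 2^(-m/2)]; this is the lower-tail
   argument for the complementary events [{X_i > c}]. *)
Lemma kth_min_upper_core (m : nat) (s c : R) : 0 < s -> K ^ m * s <= c ->
  INR k - 1/2 <= Rsum_upto n (fun i => cdf Om (X i) s) ->
  ps_P Om (fun w => ~ kth_min w <= c) <= chernoff_rate m.
Proof.
  intros Hs Hsc Hsum.
  rewrite P_compl, kth_min_cdf, tail_poly_compl by apply kth_min_rv; unfold chernoff_rate.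
  apply (tail_poly_chernoff _ (fun i => 1 - cdf Om (X i) s)).
  - pose proof (pos_INR m); pose proof ln_lt_2; nra.
  - intros i Hi; assert (Hs1 := cdf_X_bounds i s Hi); assert (Hc1 := cdf_X_bounds i c Hi).
    repeat split; try lra.
    rewrite exp_INR_ln2; apply odds_dom_compl.
    apply (odds_dom_mono _ (cdf Om (X i) s) _ (cdf Om (X i) (K ^ m * s))); try lra.
    + apply pow_le; lra.
    + split; [apply cdf_X_bounds | apply cdf_mono]; auto.
    + apply condC_iterate; auto; [lra | intros; apply cdf_X_bounds; auto].
  - rewrite Rsum_one_minus, minus_INR, S_INR by lia; lra.
Qed.

Variable q : R.
Hypotheses (Hnn : forall i w, (i < n)%nat -> 0 <= X i w)
  (Hq : is_quantile (fun s => / INR n * Rsum_upto n (fun i => cdf Om (X i) s))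
                    ((INR k - 1/2) / INR n) q).

Lemma inv_n_pos : 0 < / INR n.
Proof. apply Rinv_0_lt_compat, lt_0_INR; lia. Qed.

Lemma sum_below_quantile (s : R) : s < q ->
  Rsum_upto n (fun i => cdf Om (X i) s) <= INR k - 1/2.
Proof.
  intros Hs; apply (Rmult_le_reg_r (/ INR n)); [apply inv_n_pos|].
  rewrite Rmult_comm; exact (proj1 Hq s Hs).
Qed.

Lemma sum_at_quantile : INR k - 1/2 <= Rsum_upto n (fun i => cdf Om (X i) q).
Proof.
  apply (Rmult_le_reg_r (/ INR n)); [apply inv_n_pos|].
  rewrite (Rmult_comm (Rsum_upto _ _)); exact (proj2 Hq).
Qed.

Lemma kth_min_nonneg (w : ps_car Om) : 0 <= kth_min w.
Proof.
  apply kmin_nonneg; intros y Hy; apply in_map_iff in Hy as [i [<- Hi]].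
  apply in_seq in Hi; apply Hnn; lia.
Qed.

(* The variables are non-negative, so their cdfs vanish on negative reals,
   and a quantile of positive order is non-negative. *)
Lemma quantile_nonneg : 0 <= q.
Proof.
  destruct (Rle_or_lt 0 q) as [|Hq0]; auto; exfalso.
  assert (Hzero : Rsum_upto n (fun i => cdf Om (X i) q) <= Rsum_upto n (fun _ => 0)).
  { apply Rsum_le; intros i Hi; unfold cdf.
    rewrite (P_ext Om _ (fun _ => False)), P_empty; [lra|].
    intros w; split; [|tauto]; pose proof (Hnn i w Hi); lra. }
  assert (Rsum_upto n (fun _ => 0) = 0) by (clear; induction n; simpl; lra).
  pose proof sum_at_quantile; assert (1 <= INR k) by (apply (le_INR 1); auto); lra.
Qed.

Lemma lower_quantile_bound (m : nat) (c : R) : 0 < c -> K ^ m * c < q ->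
  ps_P Om (fun w => kth_min w <= c) <= chernoff_rate m.
Proof. intros Hc Hcq; apply kth_min_lower_core, sum_below_quantile; auto. Qed.

(* Upper bound at [K^m q] itself, obtained from all thresholds [c > K^m q]
   (this also covers [q = 0]). *)
Lemma upper_quantile_bound (m : nat) :
  ps_P Om (fun w => ~ kth_min w <= K ^ m * q) <= chernoff_rate m.
Proof.
  assert (HKm : 0 < K ^ m) by (apply pow_lt; lra); pose proof quantile_nonneg.
  apply survival_right_limit; [apply kth_min_rv|]; intros c Hc.
  apply (kth_min_upper_core m (c / K ^ m)).
  - apply Rdiv_lt_0_compat; nra.
  - right; field; lra.
  - apply Rle_trans with (Rsum_upto n (fun i => cdf Om (X i) q)); [apply sum_at_quantile|].
    apply Rsum_le; intros i Hi; apply cdf_mono; auto.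
    apply (Rmult_le_reg_l (K ^ m)); [auto|]; replace (K ^ m * (c / K ^ m)) with c by (field; lra).
    lra.
Qed.

(* Lower tail of the theorem: choose [m] with [K^m t < 1 <= K^(m+1) t]. *)
Lemma kth_min_lower_tail (t : R) : 0 < t < 1 ->
  ps_P Om (fun w => kth_min w < t * q) <= 4 * Rpower t (1 / (4 * ln K)).
Proof.
  intros [Ht Ht1]; pose proof quantile_nonneg.
  assert (Hpower : Rpower t (1 / (4 * ln K)) = Rpower (/ t) (- (1 / (4 * ln K)))).
  { unfold Rpower; rewrite ln_Rinv by auto; f_equal; ring. }
  destruct (Req_dec q 0) as [Hq0|Hq0].
  - rewrite (P_ext Om _ (fun _ => False)), P_empty by
      (intros w; pose proof (kth_min_nonneg w); rewrite Hq0, Rmult_0_r; split; [lra | tauto]).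
    unfold Rpower; pose proof (exp_pos (1 / (4 * ln K) * ln t)); lra.
  - destruct (pow_bracket K (/ t) HK) as [m [Hlow Hup]].
    { rewrite <- Rinv_1; apply Rinv_lt_contravar; lra. }
    apply Rle_trans with (ps_P Om (fun w => kth_min w <= t * q)).
    { apply P_mono; [apply meas_lt, kth_min_rv | apply kth_min_rv | intros; lra]. }
    apply Rle_trans with (chernoff_rate m).
    + apply lower_quantile_bound; [nra|].
      apply (Rmult_lt_compat_r t) in Hlow; [|lra]; rewrite Rinv_l in Hlow by lra; nra.
    + rewrite Hpower; apply chernoff_rate_le_power; auto; [lra|].
      split; [apply Rinv_0_lt_compat|]; lra.
Qed.

(* Upper tail of the theorem: choose [m] with [K^m < t <= K^(m+1)]. *)
Lemma kth_min_upper_tail (t : R) : 1 < t ->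
  ps_P Om (fun w => kth_min w > t * q) <= 4 * Rpower t (- (1 / (6 * ln K))).
Proof.
  intros Ht; pose proof quantile_nonneg.
  destruct (pow_bracket K t HK Ht) as [m [Hlow Hup]].
  apply Rle_trans with (ps_P Om (fun w => ~ kth_min w <= K ^ m * q)).
  - apply P_mono.
    + apply (meas_ext Om (fun w => ~ kth_min w <= t * q)); [intros; lra|].
      apply meas_compl, kth_min_rv.
    + apply meas_compl, kth_min_rv.
    + intros w Hw; nra.
  - apply Rle_trans with (chernoff_rate m); [apply upper_quantile_bound|].
    apply chernoff_rate_le_power; auto; lra.
Qed.

(* Medians: [2^(-9/2)] and [2^(-13/2)] are below [1/2]. *)
Lemma kth_min_median_bounds (M : R) : is_median Om kth_min M ->
  / K ^ 10 * q <= M /\ M <= K ^ 13 * q.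
Proof.
  intros [Hbelow Habove]; pose proof quantile_nonneg.
  assert (HK9 : 0 < K ^ 9) by (apply pow_lt; lra).
  split; apply Rnot_lt_le; intros HM.
  - destruct (Req_dec q 0) as [Hq0|Hq0].
    + rewrite (P_ext Om _ (fun _ => False)), P_empty in Hbelow; [lra|].
      intros w; pose proof (kth_min_nonneg w); rewrite Hq0, Rmult_0_r in HM; split; [lra | tauto].
    + assert (Hc : 0 < / K ^ 10 * q) by (apply Rmult_lt_0_compat; [apply Rinv_0_lt_compat, pow_lt|]; lra).
      assert (HK9c : K ^ 9 * (/ K ^ 10 * q) < q).
      { replace (K ^ 9 * (/ K ^ 10 * q)) with (q / K) by (simpl; field; lra).
        apply (Rmult_lt_reg_l K); [lra|]; replace (K * (q / K)) with q by (field; lra); nra. }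
      assert (H1 := lower_quantile_bound 9 _ Hc HK9c).
      assert (ps_P Om (fun w => kth_min w <= M) <= ps_P Om (fun w => kth_min w <= / K ^ 10 * q))
        by (apply P_mono; try apply kth_min_rv; intros; lra).
      pose proof (chernoff_rate_small 9 (le_n _)); lra.
  - assert (H1 := upper_quantile_bound 13).
    assert (ps_P Om (fun w => M <= kth_min w) <= ps_P Om (fun w => ~ kth_min w <= K ^ 13 * q)).
    { apply P_mono; [| apply meas_compl, kth_min_rv | intros; lra].
      apply (meas_ext Om (fun w => ~ kth_min w < M)); [intros; lra|].
      apply meas_compl, meas_lt, kth_min_rv. }
    pose proof (chernoff_rate_small 13 ltac:(lia)); lra.
Qed.

End KthMinimum.

Theorem theorem3p1 (K : R) (k n : nat) (Om : ProbSpace) (X : nat -> ps_car Om -> R)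
  (q : R) :
  1 < K -> (1 <= k)%nat -> (k <= n)%nat ->
  (forall i, (i < n)%nat -> random_variable Om (X i)) ->
  (forall i w, (i < n)%nat -> 0 <= X i w) ->
  independent Om n X ->
  (forall i, (i < n)%nat -> condC (cdf Om (X i)) K) ->
  is_quantile (fun s => / INR n * Rsum_upto n (fun i => cdf Om (X i) s))
              ((INR k - 1/2) / INR n) q ->
  let Y := fun w => kmin k (map (fun i => X i w) (seq 0 n)) in
  (forall t, 0 < t -> t < / K ^ 5 ->
     ps_P Om (fun w => Y w < t * q) <= 4 * Rpower t (1 / (4 * ln K))) /\
  (forall t, K ^ 5 < t ->
     ps_P Om (fun w => Y w > t * q) <= 4 * Rpower t (- (1 / (6 * ln K)))) /\
  (forall M, is_median Om Y M -> / K ^ 10 * q <= M /\ M <= K ^ 13 * q).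
Proof.
  intros HK Hk1 Hkn Hrv Hnn Hind HC Hq Y.
  assert (HK5 : 1 < K ^ 5) by (apply Rlt_pow_R1; auto; lia).
  split; [|split].
  - intros t Ht Ht5; eapply kth_min_lower_tail; eauto; split; auto.
    apply (Rlt_trans _ (/ K ^ 5)); auto.
    rewrite <- Rinv_1; apply Rinv_lt_contravar; lra.
  - intros t Ht5; eapply kth_min_upper_tail; eauto; lra.
  - intros M HM; eapply kth_min_median_bounds; eauto.
Qed.
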